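(* Let $(Q,I)$ be a special biserial bound quiver over an algebraically closed field $k$. Let $u-\lambda v\in I$ be a binomial relation from a point $x$ to a point $y$ (so $u\neq v$ are parallel paths from $x$ to $y$, $u,v\notin I$, $\lambda\in k\setminus\{0\}$). Suppose that $u$ starts with a simple cycle $a=\alpha_1\cdots\alpha_r$ at $x$ (i.e. $u=ap$ for some path $p$). Then: (a) If $x\neq y$: (1) if $u$ and $v$ have at least one arrow in common, then there exist a path $p$ from $x$ to $y$ and a nontrivial cycle $b$ at $y$ such that $u=ap$ and $v=pb$; (2) if $u$ and $v$ have no arrow in common, then there is a decomposition $a=a_1a_2$ with $a_1,a_2$ nontrivial paths, and a natural number $n\geq 1$, such that $u=a^na_1$. (b) If $x=y$, then there exists a simple cycle $b=\beta_1\cdots\beta_s$ at $x$ (having no arrow in common with $a$) such that one of the following holds, for some natural numbers $n,m$ and some scalar $\lambda\in k\setminus\{0\}$: (3) the relation is $a^n-\lambda b^m$, and $\alpha_r\beta_1\in I$, $\beta_s\alpha_1\in I$; (4) the relation is $(ab)^m-\lambda(ba)^m$, and $\alpha_r\alpha_1\in I$, $\beta_s\beta_1\in I$; (5) the relation is $(ab)^ma-\lambda(ba)^mb$, and $\alpha_r\alpha_1\in I$, $\beta_s\beta_1\in I$.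
   Context: A bound quiver $(Q,I)$ consists of a finite quiver $Q$ and an admissible ideal $I$ of the path algebra $kQ$, i.e. $(kQ^+)^m\subseteq I\subseteq (kQ^+)^2$ for some $m\geq 2$, where $kQ^+$ is the ideal generated by the arrows. Paths are composed left to right ($\alpha\beta$ means $\alpha$ then $\beta$). It is special biserial if (i) every point is the source of at most two arrows and the target of at most two arrows, and (ii) for every arrow $\alpha:x\to y$ there is at most one arrow $\beta$ starting at $y$ with $\alpha\beta\notin I$ and at most one arrow $\gamma$ ending at $x$ with $\gamma\alpha\notin I$. A binomial relation is an element $u-\lambda v\in I$ with $u,v$ distinct parallel paths not in $I$ and $\lambda\neq0$. A cycle at $x$ is a path from $x$ to $x$; it is simple if $x$ occurs only at its beginning and end. *)

From HB Require Import structures.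
From mathcomp Require Import all_boot all_order all_algebra.
Set Implicit Arguments. Unset Strict Implicit. Unset Printing Implicit Defensive.
Import GRing.Theory.
Local Open Scope ring_scope.

Record quiver := Quiver {
  vert : finType;
  arr : finType;
  src : arr -> vert;
  tgt : arr -> vert }.

Section Paths.
Variable Q : quiver.

(* A (candidate) path: a starting point and the list of its arrows,
   composed left to right.  The trivial path e_x is (x, [::]). *)
Definition qpath := (vert Q * seq (arr Q))%type.

Fixpoint valid_from (x : vert Q) (s : seq (arr Q)) : bool :=
  match s with
  | [::] => true
  | a :: s' => (src a == x) && valid_from (tgt a) s'
  end.

Definition valid (p : qpath) : bool := valid_from p.1 p.2.

Definition pend (p : qpath) : vert Q := last p.1 (map (@tgt Q) p.2).

(* concatenation (meaningful when pend p = q.1) *)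
Definition pcat (p q : qpath) : qpath := (p.1, p.2 ++ q.2).

Definition ppow (p : qpath) (n : nat) : qpath := (p.1, flatten (nseq n p.2)).

Definition two (al be : arr Q) : qpath := (src al, [:: al; be]).

Definition simple_cycle (a : qpath) (x : vert Q) : bool :=
  [&& valid a, a.1 == x, pend a == x, a.2 != [::]
    & all (fun al => src al != x) (behead a.2)].

Variable K : fieldType.

(* elements of the path algebra kQ, as coefficient functions on paths *)
Definition kQ := qpath -> K.

Definition kQ_elt (f : kQ) : Prop :=
  (forall p, ~~ valid p -> f p = 0) /\
  exists s : seq qpath, forall p, p \notin s -> f p = 0.

Definition pind (p : qpath) : kQ := fun q => (q == p)%:R.

Definition lmul (q : qpath) (f : kQ) : kQ := fun p =>
  if (p.1 == q.1) && (take (size q.2) p.2 == q.2)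
  then f (pend q, drop (size q.2) p.2) else 0.

Definition rmul (f : kQ) (q : qpath) : kQ := fun p =>
  let k := (size p.2 - size q.2)%N in
  let p' := (p.1, take k p.2) in
  if [&& (size q.2 <= size p.2)%N, drop k p.2 == q.2 & pend p' == q.1]
  then f p' else 0.

Definition is_ideal (I : kQ -> Prop) : Prop :=
  (forall f, I f -> kQ_elt f) /\
  I (fun _ => 0) /\
  (forall f g, I f -> I g -> I (fun p => f p + g p)) /\
  (forall c f, I f -> I (fun p => c * f p)) /\
  (forall q f, valid q -> I f -> I (lmul q f) /\ I (rmul f q)) /\
  (forall f g, (forall p, f p = g p) -> I f -> I g).

(* admissible: (kQ^+)^m <= I <= (kQ^+)^2 for some m >= 2 *)
Definition admissible (I : kQ -> Prop) : Prop :=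
  is_ideal I /\
  (exists m : nat, (2 <= m)%N /\
     forall p, valid p -> (m <= size p.2)%N -> I (pind p)) /\
  (forall f p, I f -> (size p.2 < 2)%N -> f p = 0).

Definition special_biserial (I : kQ -> Prop) : Prop :=
  (forall x : vert Q, (#|[pred a : arr Q | src a == x]| <= 2)%N /\
                      (#|[pred a : arr Q | tgt a == x]| <= 2)%N) /\
  (forall al b1 b2 : arr Q, src b1 = tgt al -> src b2 = tgt al ->
     ~ I (pind (two al b1)) -> ~ I (pind (two al b2)) -> b1 = b2) /\
  (forall al g1 g2 : arr Q, tgt g1 = src al -> tgt g2 = src al ->
     ~ I (pind (two g1 al)) -> ~ I (pind (two g2 al)) -> g1 = g2).

Definition junction_in (I : kQ -> Prop) (p q : qpath) : Prop :=
  exists (al be : arr Q) (s t : seq (arr Q)),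
    p.2 = rcons s al /\ q.2 = be :: t /\ I (pind (two al be)).

End Paths.
Arguments pind {Q K} p _.

From HB Require Import structures.
From mathcomp Require Import all_boot all_order all_algebra.
From mathcomp Require Import ring zify.
From Stdlib Require Import Classical ClassicalEpsilon.
Set Implicit Arguments. Unset Strict Implicit. Unset Printing Implicit Defensive.
Import GRing.Theory.
Local Open Scope ring_scope.

(* Three general facts drive the proof.
   (1) Nilpotency: as I is admissible, a binomial relation u - lam v with
       v a proper subpath, u = t v s, is impossible; iterating it writes v as
       a multiple of arbitrarily long paths, which lie in I.
   (2) Chains: as Q is special biserial, "be may follow al outside I" is a
       functional relation in both directions, so a path outside I is a chain
       for it and two such paths with the same first (last) arrow are
       prefix (suffix) comparable.
   (3) At most two arrows leave x; by (1) and (2) u and v start with two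
       different ones: al1, the first arrow of a, and be1.
   If x <> y, the arrow of u leaving a is be1 (then v = p b by (2), case (1))
   or al1 (then u is an initial part of a power of a, case (2)).  If x = y,
   v starts with a simple cycle b at x, u and v are words in the blocks a and
   b, and the possible transitions between blocks give cases (3)-(5). *)

(* A decidable view of an arbitrary proposition, needed to turn the
   (undecidable) membership in I into a boolean relation on arrows. *)
Definition propb (P : Prop) : bool :=
  if excluded_middle_informative P then true else false.

Lemma propbP (P : Prop) : reflect P (propb P).
Proof. by rewrite /propb; case: excluded_middle_informative => H; constructor. Qed.

Section Sequences.
Variable T : eqType.

Definition pw (l : seq T) (n : nat) : seq T := flatten (nseq n l).

Lemma size_pw l n : size (pw l n) = (n * size l)%N.
Proof. by elim: n => //= n IH; rewrite /pw /= size_cat -/(pw l n) IH mulSn. Qed.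

Lemma size_pw_ge l n : (0 < size l)%N -> (n <= size (pw l n))%N.
Proof. by move=> Hl; rewrite size_pw leq_pmulr. Qed.

Lemma mem_pw l n d : d \in pw l n -> d \in l.
Proof. by elim: n => //= n IH; rewrite /pw /= mem_cat -/(pw l n) => /orP[|/IH]. Qed.

Lemma pwSr l n : pw l n.+1 = pw l n ++ l.
Proof. by rewrite /pw -addn1 nseqD flatten_cat /= cats0. Qed.

Lemma pw_rotate (X Y : seq T) m : pw (X ++ Y) m ++ X = X ++ pw (Y ++ X) m.
Proof.
elim: m => [|m IH]; first by rewrite /pw /= cats0.
by rewrite /pw /= -/(pw (Y ++ X) m) -/(pw (X ++ Y) m) -!catA -IH.
Qed.

Lemma take_pw l n N r : (r < size l)%N -> (n < N)%N ->
  take (n * size l + r) (pw l N) = pw l n ++ take r l.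
Proof.
elim: n N => [|n IH] [|N] //= Hr HN.
- by rewrite /pw /= take_cat Hr.
- rewrite /pw /= -/(pw l N) -/(pw l n) take_cat mulSn -addnA.
  have -> : (size l + (n * size l + r) < size l)%N = false by lia.
  by rewrite addKn IH // -catA.
Qed.

Lemma sorted_pw (e : rel T) c r N : path e c r -> e (last c r) c ->
  sorted e (pw (c :: r) N).
Proof.
move=> Hs He; elim: N => [|[|N] IH] //; first by rewrite /pw /= cats0.
by rewrite [pw _ N.+2]/pw /= cat_path Hs /= He.
Qed.

Lemma split_first (p : pred T) l : has p l ->
  exists l1 d l2, l = l1 ++ d :: l2 /\ ~~ has p l1 /\ p d.
Proof.
elim: l => //= a l IH; case Pa: (p a) => /= H.
- by exists [::], a, l.
- have [l1 [d [l2 [-> [H1 H2]]]]] := IH H.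
  by exists (a :: l1), d, l2; rewrite /= Pa.
Qed.

Lemma mem_split (d : T) l : d \in l -> exists l1 l2, l = l1 ++ d :: l2.
Proof. by case/splitPr => l1 l2; exists l1, l2. Qed.

End Sequences.

Section ArrowLists.
Variable Q : quiver.
Notation A := (arr Q).
Notation V := (vert Q).

Definition lend (x : V) (l : seq A) : V := last x (map (@tgt Q) l).

Lemma lend_cat x l1 l2 : lend x (l1 ++ l2) = lend (lend x l1) l2.
Proof. by rewrite /lend map_cat last_cat. Qed.

Lemma valid_from_cat x l1 l2 :
  valid_from x (l1 ++ l2) = valid_from x l1 && valid_from (lend x l1) l2.
Proof. by elim: l1 x => [|c l1 IH] x //=; rewrite IH /lend /= andbA. Qed.

Lemma lend_pw x l n : lend x l = x -> lend x (pw l n) = x.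
Proof. by move=> H; elim: n => //= n IH; rewrite /pw /= lend_cat -/(pw l n) H IH. Qed.

(* In a valid path, the arrows after the first start where the earlier
   ones end; so avoiding x as a target before the end means avoiding x as a
   source after the beginning. *)
Lemma behead_src (x : V) c l : valid_from (src c) (c :: l) ->
  all (fun d => tgt d != x) (belast c l) -> all (fun d => src d != x) l.
Proof.
elim: l c => //= d l IH c /andP[_ /andP[/eqP Hd Hv]] /andP[Hc Hb] /=.
by rewrite Hd Hc /=; apply: (IH d) => //=; rewrite eqxx.
Qed.

Lemma inner_src_first (x : V) (t : seq A) c w :
  all (fun a => src a != x) (behead (t ++ c :: w)) -> src c = x -> t = [::].
Proof. by case: t => // a t /=; rewrite all_cat /= => /and3P[_ /eqP H _]. Qed.

Lemma at_most_two_out (x : V) (a1 b1 d : A) :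
  (#|[pred a : A | src a == x]| <= 2)%N -> src a1 = x -> src b1 = x ->
  src d = x -> a1 != b1 -> d = a1 \/ d = b1.
Proof.
move=> Hc H1 H2 H3 Hab; apply: NNPP => Hn.
have Hd1 : d != a1 by apply/eqP => E; apply: Hn; left.
have Hd2 : d != b1 by apply/eqP => E; apply: Hn; right.
have Hu : uniq [:: a1; b1; d] by rewrite /= !inE negb_or Hab eq_sym Hd1 eq_sym Hd2.
have Hs : [:: a1; b1; d] \subset [pred a : A | src a == x].
  by apply/subsetP => z; rewrite !inE => /or3P[] /eqP ->; rewrite ?H1 ?H2 ?H3 eqxx.
by have := leq_trans (subset_leq_card Hs) Hc; rewrite (card_uniqP Hu).
Qed.

End ArrowLists.

Section Chains.
Variable T : Type.

Lemma functional_paths_comparable (e : rel T)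
    (He : forall a b1 b2, e a b1 -> e a b2 -> b1 = b2) a s1 s2 :
  path e a s1 -> path e a s2 ->
  (exists t, s1 = s2 ++ t) \/ (exists t, s2 = s1 ++ t).
Proof.
elim: s1 a s2 => [|b s1 IH] a [|c s2] /=.
- by left; exists [::].
- by right; exists (c :: s2).
- by left; exists (b :: s1).
move=> /andP[eb pb1] /andP[ec pc]; have E := He _ _ _ eb ec; subst c.
by case: (IH _ _ pb1 pc) => [[t ->]|[t ->]]; [left|right]; exists t.
Qed.

Lemma cofunctional_paths_comparable (e : rel T)
    (He : forall a b1 b2, e b1 a -> e b2 a -> b1 = b2) s1 s2 z :
  sorted e (rcons s1 z) -> sorted e (rcons s2 z) ->
  (exists t, rcons s1 z = t ++ rcons s2 z) \/
  (exists t, rcons s2 z = t ++ rcons s1 z).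
Proof.
rewrite -(rev_sorted _ (rcons s1 z)) -(rev_sorted _ (rcons s2 z)) !rev_rcons.
have He' : forall a b1 b2, (fun x y => e y x) a b1 -> (fun x y => e y x) a b2 -> b1 = b2.
  by move=> a b1 b2 /= h1 h2; apply: (He a).
move=> H1 H2; case: (functional_paths_comparable He' H1 H2) => [[t Ht]|[t Ht]];
  [left|right]; exists (rev t); apply: (inv_inj (@revK _));
  by rewrite rev_cat !rev_rcons revK Ht.
Qed.

End Chains.

Section IdealArithmetic.
Variables (k : fieldType) (Q : quiver).

Lemma lmul_pind (q p r : qpath Q) : pend q = p.1 ->
  lmul q (pind p) r = pind (q.1, q.2 ++ p.2) r :> k.
Proof.
case: q p r => [qx ql] [px pl] [rx rl] /= Hq; rewrite /lmul /pind /=.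
case: ifP => [/andP[/eqP E1 /eqP E2]|H].
- congr (_%:R); congr (nat_of_bool _); apply/idP/idP => /eqP H; apply/eqP; move: H.
  + by case=> _ <-; rewrite E1 -{1}E2 cat_take_drop.
  + by case=> _ ->; rewrite Hq drop_size_cat.
- by case: eqP => // -[E1 E2]; move: H; rewrite E1 E2 eqxx take_size_cat // eqxx.
Qed.

Lemma rmul_pind (p q r : qpath Q) : pend p = q.1 ->
  rmul (pind p) q r = pind (p.1, p.2 ++ q.2) r :> k.
Proof.
case: q p r => [qx ql] [px pl] [rx rl] /= Hq; rewrite /rmul /pind /=.
case: ifP => [/and3P[Hs /eqP E2 /eqP E3]|H].
- congr (_%:R); congr (nat_of_bool _); apply/idP/idP => /eqP H; apply/eqP; move: H.
  + by case=> -> <-; rewrite -[X in _ ++ X]E2 cat_take_drop.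
  + by case=> -> ->; rewrite size_cat addnK take_size_cat.
- case: eqP => // -[E1 E2]; move: H; subst.
  by rewrite size_cat leq_addl addnK drop_size_cat // take_size_cat //= !eqxx.
Qed.

Variable I : kQ Q k -> Prop.
Hypothesis HI : is_ideal I.

Lemma I_ext f g : (forall p, f p = g p) -> I f -> I g.
Proof. by case: HI => _ [_ [_ [_ [_ H]]]]; apply: H. Qed.
Lemma I_zero : I (fun _ => 0).
Proof. by case: HI => _ [H _]. Qed.
Lemma I_add f g : I f -> I g -> I (fun p => f p + g p).
Proof. by case: HI => _ [_ [H _]]; apply: H. Qed.
Lemma I_scale c f : I f -> I (fun p => c * f p).
Proof. by case: HI => _ [_ [_ [H _]]]; apply: H. Qed.
Lemma I_lmul q f : valid q -> I f -> I (lmul q f).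
Proof. by case: HI => _ [_ [_ [_ [H _]]]] Hq If; case: (H q f Hq If). Qed.
Lemma I_rmul q f : valid q -> I f -> I (rmul f q).
Proof. by case: HI => _ [_ [_ [_ [H _]]]] Hq If; case: (H q f Hq If). Qed.

Lemma I_lmul_pind q p : valid q -> pend q = p.1 -> I (pind p) ->
  I (pind (q.1, q.2 ++ p.2)).
Proof. by move=> Hq E /(I_lmul Hq); apply: I_ext => r; apply: lmul_pind. Qed.

Lemma I_rmul_pind q p : valid q -> pend p = q.1 -> I (pind p) ->
  I (pind (p.1, p.2 ++ q.2)).
Proof. by move=> Hq E /(I_rmul Hq); apply: I_ext => r; apply: rmul_pind. Qed.

Lemma I_lmul_rel q u v c : valid q -> pend q = u.1 -> pend q = v.1 ->
  I (fun r => pind u r - c * pind v r) ->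
  I (fun r => pind (q.1, q.2 ++ u.2) r - c * pind (q.1, q.2 ++ v.2) r).
Proof.
move=> Hq Eu Ev /(I_lmul Hq); apply: I_ext => r.
rewrite -(lmul_pind _ Eu) -(lmul_pind _ Ev) /lmul.
by case: ifP => _ //; rewrite mulr0 subr0.
Qed.

Lemma I_rmul_rel q u v c : valid q -> pend u = q.1 -> pend v = q.1 ->
  I (fun r => pind u r - c * pind v r) ->
  I (fun r => pind (u.1, u.2 ++ q.2) r - c * pind (v.1, v.2 ++ q.2) r).
Proof.
move=> Hq Eu Ev /(I_rmul Hq); apply: I_ext => r.
rewrite -(rmul_pind _ Eu) -(rmul_pind _ Ev) /rmul.
by case: ifP => _ //; rewrite mulr0 subr0.
Qed.

Lemma I_rel_sym (u v : qpath Q) c : c != 0 ->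
  I (fun r => pind u r - c * pind v r) -> I (fun r => pind v r - c^-1 * pind u r).
Proof.
move=> Hc /(I_scale (- c^-1)); apply: I_ext => r.
by rewrite mulrBr !mulNr mulrA mulVf // mul1r opprK addrC.
Qed.

Lemma I_path_through_zero_pair x l1 al be l2 : valid (x, l1 ++ al :: be :: l2) ->
  I (pind (two al be)) -> I (pind (x, l1 ++ al :: be :: l2)).
Proof.
rewrite /valid /= valid_from_cat /= => /and3P[H1 /eqP Hal /andP[/eqP Hbe H2]] Ip.
have := @I_rmul_pind (tgt be, l2) (two al be) H2 (erefl _) Ip.
by move=> /(@I_lmul_pind (x, l1) (src al, [:: al, be & l2]) H1 (esym Hal)).
Qed.

End IdealArithmetic.

Section Nilpotency.
Variables (k : fieldType) (Q : quiver) (I : kQ Q k -> Prop).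
Hypothesis HI : is_ideal I.

Variables (x y : vert Q) (t lv s : seq (arr Q)) (c : k).

Definition sandwich (N : nat) : seq (arr Q) := iter N (fun l => t ++ l ++ s) lv.

Lemma size_sandwich N : size (sandwich N) = (N * size (t ++ s) + size lv)%N.
Proof. by elim: N => //= N IH; rewrite -/(sandwich N) !size_cat IH size_cat; lia. Qed.

Hypotheses (Vt : valid_from x t) (Et : lend x t = x).
Hypotheses (Vs : valid_from y s) (Es : lend y s = y).
Hypotheses (Vv : valid_from x lv) (Ev : lend x lv = y).
Hypothesis Hrel : I (fun r => pind (x, t ++ lv ++ s) r - c * pind (x, lv) r).

Lemma sandwich_path N : valid_from x (sandwich N) /\ lend x (sandwich N) = y.
Proof.
elim: N => [|N [IH1 IH2]] //=; rewrite -/(sandwich N).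
by rewrite !valid_from_cat !lend_cat Et IH1 IH2 Vt Vs Es.
Qed.

Lemma sandwich_rel N : I (fun r => pind (x, sandwich N) r - c ^+ N * pind (x, lv) r).
Proof.
have step M : I (fun r => pind (x, sandwich M.+1) r - c * pind (x, sandwich M) r).
  elim: M => [|M IH]; first exact: Hrel.
  have [Pv Pe] := sandwich_path M.+1; have [Qv Qe] := sandwich_path M.
  have := @I_rmul_rel _ _ _ HI (y, s) (x, sandwich M.+1) (x, sandwich M) c Vs Pe Qe IH.
  exact: (@I_lmul_rel _ _ _ HI (x, t) (x, sandwich M.+1 ++ s) (x, sandwich M ++ s) c Vt Et Et).
elim: N => [|N IH].
  by apply: (I_ext HI) (I_zero HI) => r /=; rewrite expr0 mul1r subrr.
apply: (I_ext HI) (I_add HI (step N) (I_scale HI c IH)) => r.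
by rewrite exprS; ring.
Qed.

End Nilpotency.

Lemma binomial_not_proper_subpath (k : fieldType) (Q : quiver) (I : kQ Q k -> Prop)
    x lu lv t s (c : k) :
  admissible I -> valid (x, lu) -> valid (x, lv) -> lend x lu = lend x lv ->
  c != 0 -> I (fun r => pind (x, lu) r - c * pind (x, lv) r) ->
  ~ I (pind (x, lv)) -> lv != [::] -> lu = t ++ lv ++ s -> t ++ s != [::] -> False.
Proof.
move=> [HI [[m [_ Hm]] _]] Hu Hv Hend Hc Hrel Hnv Hne Elu Hts.
move: (Hu); rewrite Elu /valid /= !valid_from_cat => /and3P[Vt Vv Vs].
have Et : lend x t = x.
  case: lv Hne Vv Hv {Hu Hnv Hend Elu Hrel Vs} => // be lv' _ /= /andP[/eqP H1 _].
  by case/andP => /eqP H2 _; rewrite -H1 H2.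
rewrite Et in Vv Vs.
have Es : lend (lend x lv) s = lend x lv by move: Hend; rewrite Elu !lend_cat Et.
rewrite Elu in Hrel.
have [Pv _] := sandwich_path Vt Et Vs Es Vv (erefl _) m.
have Im : I (pind (x, sandwich t lv s m)).
  apply: (Hm (x, _) Pv); rewrite /= size_sandwich.
  by apply: leq_trans (leq_addr _ _); rewrite leq_pmulr // lt0n size_eq0.
have Hcm : I (fun r => c ^+ m * pind (x, lv) r).
  have := I_add HI (I_scale HI (-1) (sandwich_rel HI Vt Et Vs Es Vv (erefl _) Hrel m)) Im.
  by apply: (I_ext HI) => r /=; ring.
apply: Hnv; apply: (I_ext HI) (I_scale HI (c ^+ m)^-1 Hcm) => r /=.
by rewrite mulrA mulVf ?mul1r // expf_neq0.
Qed.

(* The second path of a binomial relation in an admissible ideal is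
   nontrivial, since the elements of I vanish on trivial paths. *)
Lemma binomial_path_nontrivial (k : fieldType) (Q : quiver) (I : kQ Q k -> Prop)
    (u v : qpath Q) c :
  admissible I -> u <> v -> c != 0 -> I (fun r => pind u r - c * pind v r) ->
  v.2 != [::].
Proof.
move=> [_ [_ HI2]] Hne Hc Hr; apply/eqP => E.
have := HI2 _ v Hr; rewrite E /= => /(_ isT); rewrite /pind eqxx.
have -> : (v == u) = false by apply/eqP => Ev; apply: Hne.
by rewrite add0r mulr1 => /eqP; rewrite oppr_eq0 (negPf Hc).
Qed.

Section SpecialBiserial.
Variables (k : fieldType) (Q : quiver) (I : kQ Q k -> Prop).
Hypothesis HA : admissible I.
Hypothesis HSB : special_biserial I.
Let HI : is_ideal I := HA.1.

Definition follows : rel (arr Q) :=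
  fun al be => propb (src be = tgt al /\ ~ I (pind (two al be))).

Lemma follows_functional al be1 be2 : follows al be1 -> follows al be2 -> be1 = be2.
Proof.
move=> /propbP[H1 N1] /propbP[H2 N2]; case: HSB => _ [H _].
exact: H H1 H2 N1 N2.
Qed.

Lemma follows_cofunctional be al1 al2 : follows al1 be -> follows al2 be -> al1 = al2.
Proof.
move=> /propbP[H1 N1] /propbP[H2 N2]; case: HSB => _ [_ H].
exact: H (esym H1) (esym H2) N1 N2.
Qed.

Lemma zero_pair_of_not_follows al be : src be = tgt al -> ~~ follows al be ->
  I (pind (two al be)).
Proof. by move=> Hs /propbP Hn; apply: NNPP => Hi; apply: Hn. Qed.

Lemma follows_sorted_of_notin x l : valid (x, l) -> ~ I (pind (x, l)) ->
  sorted follows l.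
Proof.
have chain al l0 l' : valid_from x (l0 ++ al :: l') ->
    ~ I (pind (x, l0 ++ al :: l')) -> path follows al l'.
  elim: l' al l0 => [|be l' IH] al l0 //= Hv Hn; apply/andP; split.
  - apply/propbP; split.
      by move: Hv; rewrite valid_from_cat /= => /and4P[_ _ /eqP].
    by move=> Hi; apply: Hn; apply: I_path_through_zero_pair.
  - by apply: (IH be (rcons l0 al)); rewrite cat_rcons.
by case: l => [|al l] //= Hv Hn; apply: (chain al [::]).
Qed.

End SpecialBiserial.

Section BoolWords.

Fixpoint alt (b : bool) (n : nat) : seq bool :=
  if n is n'.+1 then b :: alt (~~ b) n' else [::].

Lemma word_const (T : rel bool) b w : sorted T (b :: w) -> ~~ T b (~~ b) ->
  b :: w = nseq (size w).+1 b.
Proof.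
elim: w => //= c w IH /andP[Hc Hp] Hn.
have Ec : c = b by case: b c Hc Hn {IH Hp} => [] [] // ->.
by subst c; rewrite IH.
Qed.

Lemma word_single (T : rel bool) b w : sorted T (b :: w) -> ~~ T b b ->
  ~~ T b (~~ b) -> w = [::].
Proof. by case: w => //= c w /andP[Hc _]; case: b c Hc => [] [] ->. Qed.

Lemma word_alt (T : rel bool) : ~~ T true true -> ~~ T false false ->
  forall w b, sorted T (b :: w) -> b :: w = alt b (size w).+1.
Proof.
move=> H1 H2; elim=> //= c w IH b /andP[Hc Hp].
have Ec : c = ~~ b.
  by case: b c Hc {IH Hp} => [] [] // Hc; [rewrite Hc in H1|rewrite Hc in H2].
by subst c; rewrite (IH _ Hp).
Qed.

Lemma alt_prefix b n m : (n <= m)%N -> exists r, alt b m = alt b n ++ r.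
Proof.
elim: n b m => [|n IH] b m Hnm; first by exists (alt b m).
case: m Hnm => // m Hnm; have [r Hr] := IH (~~ b) m Hnm.
by exists r; rewrite /= Hr.
Qed.

End BoolWords.

Section Situation.
Variables (k : fieldType) (Q : quiver) (I : kQ Q k -> Prop).
Hypothesis HA : admissible I.
Hypothesis HSB : special_biserial I.
Let HI : is_ideal I := HA.1.

Variable x : vert Q.
Variables (al1 be1 : arr Q) (la' lp lv' : seq (arr Q)) (lam : k).
Let la := al1 :: la'.
Let lu := la ++ lp.
Let lv := be1 :: lv'.
Hypothesis Hu : valid_from x lu.
Hypothesis Hv : valid_from x lv.
Hypothesis Hend : lend x lu = lend x lv.
Hypothesis Hne : lu <> lv.
Hypothesis HnU : ~ I (pind (x, lu)).
Hypothesis HnV : ~ I (pind (x, lv)).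
Hypothesis Hlam : lam != 0.
Hypothesis Hrel : I (fun r => pind (x, lu) r - lam * pind (x, lv) r).
Hypothesis Hla_end : lend x la = x.
Hypothesis Hla_simp : all (fun d => src d != x) la'.

Local Notation e := (follows I).

Lemma v_not_inside_u t s : lu = t ++ lv ++ s -> t ++ s != [::] -> False.
Proof. exact: binomial_not_proper_subpath HA Hu Hv Hend Hlam Hrel HnV isT. Qed.

Lemma u_not_inside_v t s : lv = t ++ lu ++ s -> t ++ s != [::] -> False.
Proof.
have Hlam' : lam^-1 != 0 by rewrite invr_eq0.
exact: binomial_not_proper_subpath HA Hv Hu (esym Hend) Hlam'
  (I_rel_sym HI Hlam Hrel) HnU isT.
Qed.

Lemma sorted_u : sorted e lu.
Proof. exact: (@follows_sorted_of_notin _ _ _ HA x lu Hu HnU). Qed.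

Lemma sorted_v : sorted e lv.
Proof. exact: (@follows_sorted_of_notin _ _ _ HA x lv Hv HnV). Qed.

Lemma sorted_la : path e al1 la'.
Proof. by have /cat_sorted2[] := sorted_u. Qed.

Lemma src_al1 : src al1 = x.
Proof. by case/andP: Hu => /eqP. Qed.

Lemma src_be1 : src be1 = x.
Proof. by case/andP: Hv => /eqP. Qed.

(* u and v start with different arrows, otherwise one would be a proper
   subpath of the other by chain comparability. *)
Lemma first_arrows_differ : al1 != be1.
Proof.
apply/eqP => E.
have P1 : path e al1 (la' ++ lp) by exact: sorted_u.
have P2 : path e al1 lv' by rewrite E; exact: sorted_v.
case: (functional_paths_comparable (follows_functional HSB) P1 P2) => [[t Ht]|[t Ht]].
- apply: (@v_not_inside_u [::] t); first by rewrite /lu /la /lv /= Ht E.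
  by rewrite cat0s; apply/eqP => t0; apply: Hne; rewrite /lu /la /lv /= Ht t0 cats0 E.
- apply: (@u_not_inside_v [::] t); first by rewrite /lu /la /lv /= -E Ht -catA.
  by rewrite cat0s; apply/eqP => t0; apply: Hne; rewrite /lu /la /lv -E /= Ht t0 cats0.
Qed.

Lemma arrow_from_x d : src d = x -> d = al1 \/ d = be1.
Proof.
move=> Hd; have [Hc1 _] := HSB.1 x.
exact: at_most_two_out Hc1 src_al1 src_be1 Hd first_arrows_differ.
Qed.

Lemma in_la_from_x d : d \in la -> src d = x -> d = al1.
Proof.
rewrite inE => /orP[/eqP //|Hd] Hs.
by move: Hla_simp => /allP /(_ d Hd); rewrite Hs eqxx.
Qed.

Section DistinctEnds.
Hypothesis Hxy : x <> lend x lu.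

(* Since u does not end at x, p is nontrivial; its first arrow leaves x. *)
Lemma p_head : exists ga lp', lp = ga :: lp' /\ src ga = x.
Proof.
case E: lp => [|ga lp']; first by case: Hxy; rewrite /lu E cats0.
by exists ga, lp'; move: Hu; rewrite /lu valid_from_cat E Hla_end /= => /and3P[_ /eqP].
Qed.

Lemma a_closes_up lp' : lp = al1 :: lp' -> e (last al1 la') al1.
Proof. by move=> Elp; have := sorted_u; rewrite /lu Elp /= cat_path => /andP[_ /andP[]]. Qed.

(* If p starts with be1, the chains p and v are comparable; v cannot be a
   prefix of p, so v = p b with b nontrivial. *)
Lemma v_extends_p lp' : lp = be1 :: lp' -> exists t, lv = lp ++ t /\ t != [::].
Proof.
move=> Elp.
have P1 : path e be1 lp'.
  by have := sorted_u; rewrite /lu Elp /= cat_path => /andP[_ /andP[]].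
case: (functional_paths_comparable (follows_functional HSB) P1 sorted_v) => [[t Ht]|[[|c t] Ht]].
- by case: (@v_not_inside_u la t) => //; rewrite /lu /lv Elp Ht.
- by case: (@v_not_inside_u la [::]) => //; rewrite /lu /lv Elp Ht !cats0.
- by exists (c :: t); rewrite /lv Elp Ht.
Qed.

Lemma u_prefix_of_power lp' : lp = al1 :: lp' -> exists t, pw la (size lu).+1 = lu ++ t.
Proof.
move=> Elp; have He := a_closes_up Elp.
have P1 : path e al1 (la' ++ lp) by exact: sorted_u.
have P2 : path e al1 (la' ++ pw la (size lu)) by exact: sorted_pw (size lu).+1 sorted_la He.
case: (functional_paths_comparable (follows_functional HSB) P1 P2) => [[t Ht]|[t Ht]].
- have Hsz : size lp = (size (pw la (size lu)) + size t)%N.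
    by apply/eqP; rewrite -(eqn_add2l (size la')) addnA -!size_cat Ht.
  have : (size lu <= size lp)%N.
    by rewrite Hsz; apply: leq_trans (leq_addr _ _); exact: size_pw_ge.
  by rewrite {1}/lu size_cat -{2}[size lp]add0n leq_add2r.
- exists t; transitivity (al1 :: (la' ++ pw la (size lu))); first by [].
  by rewrite Ht.
Qed.

Lemma u_power_prefix lp' : lp = al1 :: lp' ->
  exists r n, [/\ (0 < r < size la)%N, (1 <= n)%N & lu = pw la n ++ take r la].
Proof.
move=> Elp; have [t Ht] := u_prefix_of_power Elp.
exists (size lu %% size la)%N, (size lu %/ size la)%N.
have Hr : (size lu %% size la < size la)%N by rewrite ltn_mod.
have Hn : (size lu %/ size la < (size lu).+1)%N by rewrite ltnS leq_div.
have Elu : lu = pw la (size lu %/ size la) ++ take (size lu %% size la) la.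
  by rewrite -(take_pw Hr Hn) -divn_eq Ht take_size_cat.
split => //; last by rewrite divn_gt0 // /lu size_cat; lia.
rewrite Hr andbT lt0n; apply/eqP => H0; apply: Hxy.
by rewrite Elu H0 take0 cats0 lend_pw.
Qed.

(* If p starts with al1, u and v share no arrow: a common arrow d lies in
   a; the chains of u (inside a power of a) and of v up to d are suffix
   comparable, which forces be1 into a or v to be too long. *)
Lemma no_common_arrow lp' d : lp = al1 :: lp' -> d \in lu -> d \in lv -> False.
Proof.
move=> Elp Hdu Hdv; have [t Ht] := u_prefix_of_power Elp.
have He := a_closes_up Elp.
have Hdla : d \in la by apply: (@mem_pw _ la (size lu).+1); rewrite Ht mem_cat Hdu.
have [l1 [l2 El]] := mem_split Hdla.
have [v1 [v2 Ev]] := mem_split Hdv.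
pose K := size lv.
have S1 : sorted e (rcons (pw la K ++ l1) d).
  have : sorted e (rcons (pw la K ++ l1) d ++ l2).
    by rewrite -cats1 -!catA /= -El -pwSr; exact: (@sorted_pw _ _ al1 la' K.+1 sorted_la He).
  by case/cat_sorted2.
have S2 : sorted e (rcons v1 d).
  by have := sorted_v; rewrite Ev -cat_rcons => /cat_sorted2[].
case: (cofunctional_paths_comparable (follows_cofunctional HSB) S1 S2) => [[s Hs1]|[s Hs1]].
- have Hb : be1 \in rcons v1 d.
    by move: Ev; rewrite /lv; case: v1 {S2 Hs1} => [|c v1] /= [-> _]; rewrite inE eqxx.
  have : be1 \in la.
    have : be1 \in s ++ rcons v1 d by rewrite mem_cat Hb orbT.
    rewrite -Hs1 mem_rcons inE mem_cat.
    case/orP => [/eqP ->|/orP[/mem_pw //|H]]; rewrite El mem_cat inE ?eqxx ?orbT //.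
    by rewrite H.
  by move=> /in_la_from_x /(_ src_be1) E; move: first_arrows_differ; rewrite E eqxx.
- have Hsz : (size (pw la K) <= size v1)%N.
    move/(congr1 size): Hs1; rewrite size_cat !size_rcons size_cat => E.
    by rewrite -ltnS E addnS ltnS addnCA leq_addr.
  have : (size v1 < K)%N by rewrite /K Ev size_cat /= addnS ltnS leq_addr.
  by rewrite ltnNge (leq_trans (@size_pw_ge _ la K isT) Hsz).
Qed.

Lemma distinct_common : (exists d, d \in lu /\ d \in lv) ->
  exists p b : qpath Q,
    valid p /\ p.1 = x /\ pend p = lend x lu /\
    valid b /\ b.1 = lend x lu /\ pend b = lend x lu /\ b.2 != [::] /\
    (x, lu) = pcat (x, la) p /\ (x, lv) = pcat p b.
Proof.
move=> [d [Hdu Hdv]]; have [ga [lp' [Elp Hs]]] := p_head.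
case: (arrow_from_x Hs) => Eg; subst ga; first by case: (no_common_arrow Elp Hdu Hdv).
have [t [Et Ht]] := v_extends_p Elp.
have Vp : valid_from x lp by move: Hu; rewrite valid_from_cat Hla_end => /andP[].
have Ep : lend x lp = lend x lu by rewrite /lu lend_cat Hla_end.
have Vt : valid_from (lend x lu) t by move: Hv; rewrite Et valid_from_cat Ep => /andP[].
have Eb : lend (lend x lu) t = lend x lu by rewrite -{1}Ep -lend_cat -Et -Hend.
by exists (x, lp), (lend x lu, t); rewrite /pcat /= Et.
Qed.

Lemma distinct_disjoint : (forall d, d \in lu -> d \notin lv) ->
  exists (a1 a2 : qpath Q) (n : nat),
    valid a1 /\ a1.1 = x /\ valid a2 /\ a2.1 = pend a1 /\
    a1.2 != [::] /\ a2.2 != [::] /\ (x, la) = pcat a1 a2 /\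
    (1 <= n)%N /\ (x, lu) = pcat (ppow (x, la) n) a1.
Proof.
move=> Hdis; have [ga [lp' [Elp Hs]]] := p_head.
case: (arrow_from_x Hs) => Eg; subst ga; last first.
  by have := Hdis be1; rewrite /lu Elp mem_cat mem_head orbT mem_head => /(_ isT).
have [r [n [/andP[Hr0 Hr] Hn Elu]]] := u_power_prefix Elp.
have /andP[V1 V2] : valid_from x (take r la) && valid_from (lend x (take r la)) (drop r la).
  by rewrite -valid_from_cat cat_take_drop; move: Hu; rewrite valid_from_cat => /andP[].
exists (x, take r la), (lend x (take r la), drop r la), n.
do 4!split => //; split; first by rewrite -size_eq0 size_take Hr -lt0n.
split; first by rewrite -size_eq0 size_drop subn_eq0 -ltnNge.
by rewrite /pcat /= cat_take_drop Elu.
Qed.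

End DistinctEnds.

Section ClosedRelation.
Hypothesis Hxx : lend x lu = x.

(* If u ends at x, so does v; cutting v at its first return to x gives a
   simple cycle b = be1 lb' at x. *)
Lemma v_starts_with_cycle : exists lb' l2, [/\ lv = (be1 :: lb') ++ l2,
  lend x (be1 :: lb') = x & all (fun d => src d != x) lb'].
Proof.
have Hl : tgt (last be1 lv') = x.
  by have := Hend; rewrite Hxx /lend /lv /= (last_map (@tgt Q)) => <-.
have Hh : has (fun d => tgt d == x) lv.
  by apply/hasP; exists (last be1 lv'); [exact: mem_last | rewrite Hl].
have [l1 [d [l2 [El [Hn Hd]]]]] := split_first Hh.
have [lb' Elb] : exists lb', rcons l1 d = be1 :: lb'.
  move: El; rewrite /lv; case: (l1) => [|c l1'] /= [-> _]; first by exists [::].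
  by exists (rcons l1' d).
exists lb', l2; split; first by rewrite -Elb cat_rcons.
- by rewrite -Elb /lend map_rcons last_rcons; apply/eqP.
- have Hvb : valid_from (src be1) (be1 :: lb').
    by rewrite src_be1 -Elb; move: Hv; rewrite El -cat_rcons valid_from_cat => /andP[].
  apply: (behead_src Hvb).
  have -> : belast be1 lb' = l1 by have := lastI be1 lb'; rewrite -Elb => /rcons_inj [].
  by rewrite all_predC.
Qed.

Section Blocks.
Variables (lb' l2 : seq (arr Q)).
Let lb := be1 :: lb'.
Hypothesis Hlv : lv = lb ++ l2.
Hypothesis Hlb_end : lend x lb = x.
Hypothesis Hlb_simp : all (fun d => src d != x) lb'.

Lemma sorted_lb : path e be1 lb'.
Proof. by have := sorted_v; rewrite Hlv => /cat_sorted2[]. Qed.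

(* The cycles a and b have no arrow in common: the chains of a and b up to
   a common arrow are suffix comparable, which would make al1 or be1 an
   inner arrow of a simple cycle at x. *)
Lemma cycles_disjoint d : d \in la -> d \notin lb.
Proof.
move=> Hda; apply/negP => Hdb.
have [m1 [m2 Ea]] := mem_split Hda.
have [n1 [n2 Eb]] := mem_split Hdb.
have S1 : sorted e (rcons m1 d).
  by have : sorted e la := sorted_la; rewrite Ea -cat_rcons => /cat_sorted2[].
have S2 : sorted e (rcons n1 d).
  by have : sorted e lb := sorted_lb; rewrite Eb -cat_rcons => /cat_sorted2[].
have head_rcons c L p q : c :: L = rcons p d ++ q -> exists w, rcons p d = c :: w.
  by case: p => [|a' p] /= [-> _]; [exists [::] | exists (rcons p d)].
have [wa Ewa] := head_rcons _ _ _ _ (etrans Ea (esym (cat_rcons _ _ _))).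
have [wb Ewb] := head_rcons _ _ _ _ (etrans Eb (esym (cat_rcons _ _ _))).
case: (cofunctional_paths_comparable (follows_cofunctional HSB) S1 S2) => [[t Ht]|[t Ht]].
- have E2 : la = t ++ be1 :: (wb ++ m2) by rewrite Ea -cat_rcons Ht Ewb -catA.
  have Ht0 : t = [::].
    by apply: (inner_src_first (x := x) (w := wb ++ m2)) src_be1; rewrite -E2.
  by move: E2 first_arrows_differ; rewrite Ht0 => -[->]; rewrite eqxx.
- have E2 : lb = t ++ al1 :: (wa ++ n2) by rewrite Eb -cat_rcons Ht Ewa -catA.
  have Ht0 : t = [::].
    by apply: (inner_src_first (x := x) (w := wa ++ n2)) src_al1; rewrite -E2.
  by move: E2 first_arrows_differ; rewrite Ht0 => -[->]; rewrite eqxx.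
Qed.

(* The two blocks, indexed by bool: true for a, false for b. *)
Definition first_arrow (b : bool) := if b then al1 else be1.
Definition rest (b : bool) := if b then la' else lb'.
Definition block (b : bool) := first_arrow b :: rest b.
Definition last_arrow (b : bool) := last (first_arrow b) (rest b).

Definition expand (w : seq bool) := flatten (map block w).
Definition block_follows : rel bool := fun b1 b2 => e (last_arrow b1) (first_arrow b2).

Lemma block_sorted b : path e (first_arrow b) (rest b).
Proof. by case: b; [exact: sorted_la | exact: sorted_lb]. Qed.

Lemma block_valid b : valid_from x (block b).
Proof.
move: Hu Hv; rewrite /lu Hlv !valid_from_cat => /andP[Va _] /andP[Vb _].
by case: b.
Qed.

Lemma block_end b : lend x (block b) = x.
Proof. by case: b. Qed.

Lemma rest_simp b : all (fun d => src d != x) (rest b).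
Proof. by case: b. Qed.

Lemma src_first_arrow b : src (first_arrow b) = x.
Proof. by case: b; [exact: src_al1 | exact: src_be1]. Qed.

Lemma tgt_last_arrow b : tgt (last_arrow b) = x.
Proof. by have := block_end b; rewrite /lend /block /= (last_map (@tgt Q)). Qed.

(* A path outside I, from x to x and starting with a block, is a word of
   blocks: by chain comparability it either is a prefix of the block (hence
   the block itself, the rest of a block avoiding x) or continues past it
   with an arrow leaving x, that is, with the first arrow of a block. *)
Lemma closed_chain_blocks n : forall W b W', (size W < n)%N -> W = first_arrow b :: W' ->
  sorted e W -> valid_from x W -> lend x W = x ->
  exists w, W = expand (b :: w) /\ sorted block_follows (b :: w).
Proof.
elim: n => // n IH W b W' Hn EW HsW HvW HeW.
have Hp1 : path e (first_arrow b) W' by move: HsW; rewrite EW.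
case: (functional_paths_comparable (follows_functional HSB) Hp1 (block_sorted b))
  => [[[|c t] Ht]|[[|c t] Ht]].
- by exists [::]; rewrite EW Ht /expand /= !cats0.
- have EW2 : W = block b ++ c :: t by rewrite EW Ht.
  move: HvW; rewrite EW2 valid_from_cat block_end => /andP[_ Hvt].
  have Hsc : src c = x by move: Hvt => /= /andP[/eqP].
  have [b'' Eb''] : exists b'', c = first_arrow b''.
    by case: (arrow_from_x Hsc) => ->; [exists true | exists false].
  have Hpc : path e (last_arrow b) (c :: t).
    by move: HsW; rewrite EW2 /block /= cat_path => /andP[].
  have Hec : block_follows b b'' by move: Hpc => /= /andP[]; rewrite /block_follows -Eb''.
  have [w [Ew Sw]] : exists w, c :: t = expand (b'' :: w) /\ sorted block_follows (b'' :: w).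
    apply: (IH (c :: t) b'' t) => //.
    + by move: Hn; rewrite EW2 size_cat /block /=; lia.
    + by rewrite Eb''.
    + exact: path_sorted Hpc.
    + by move: HeW; rewrite EW2 lend_cat block_end.
  by exists (b'' :: w); split; [rewrite Ew | rewrite /= Hec].
- by exists [::]; rewrite EW /expand /block /= Ht !cats0.
- exfalso; have Hvb := block_valid b.
  rewrite /block Ht -cat_cons -EW valid_from_cat HeW in Hvb.
  have Hsc : src c = x by move: Hvb => /andP[_ /= /andP[/eqP]].
  by have := rest_simp b; rewrite Ht all_cat /= Hsc eqxx andbF.
Qed.

Lemma expand_nseq b n : expand (nseq n b) = pw (block b) n.
Proof. by rewrite /expand map_nseq. Qed.

Lemma expand_cat w1 w2 : expand (w1 ++ w2) = expand w1 ++ expand w2.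
Proof. by rewrite /expand map_cat flatten_cat. Qed.

Lemma expand_alt_even b m : expand (alt b m.*2) = pw (block b ++ block (~~ b)) m.
Proof.
elim: m b => [|m IH] b //; rewrite doubleS /= negbK.
by rewrite /expand /= -/(expand (alt b m.*2)) IH /pw /= -catA.
Qed.

Lemma expand_alt_odd b m :
  expand (alt b m.*2.+1) = pw (block b ++ block (~~ b)) m ++ block b.
Proof.
rewrite /= /expand /= -/(expand (alt (~~ b) m.*2)) expand_alt_even negbK.
exact: esym (pw_rotate (block b) (block (~~ b)) m).
Qed.

Lemma block_junction b1 b2 : ~~ block_follows b1 b2 ->
  junction_in I (x, block b1) (x, block b2).
Proof.
move=> Hn; exists (last_arrow b1), (first_arrow b2), (belast (first_arrow b1) (rest b1)), (rest b2).
split; first by rewrite /= -lastI.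
split=> //; apply: zero_pair_of_not_follows Hn.
by rewrite src_first_arrow tgt_last_arrow.
Qed.

(* Distinct blocks start with distinct arrows (al1 <> be1) and end with
   distinct arrows (a and b are disjoint), so block_follows is functional in
   both directions. *)
Lemma block_follows_functional b b1 b2 :
  block_follows b b1 -> block_follows b b2 -> b1 = b2.
Proof.
move=> H1 H2; have := follows_functional HSB H1 H2.
by case: b1 b2 {H1 H2} => [] [] //= E; move: first_arrows_differ; rewrite E eqxx.
Qed.

Lemma block_follows_cofunctional b b1 b2 :
  block_follows b1 b -> block_follows b2 b -> b1 = b2.
Proof.
move=> H1 H2; have := follows_cofunctional HSB H1 H2.
case: b1 b2 {H1 H2} => [] [] //= E.
- by have := @cycles_disjoint (last_arrow true); rewrite mem_last E mem_last => /(_ isT).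
- by have := @cycles_disjoint (last_arrow true); rewrite mem_last -E mem_last => /(_ isT).
Qed.

Lemma closed_words : exists wu wv,
  [/\ lu = expand (true :: wu), lv = expand (false :: wv),
      sorted block_follows (true :: wu) & sorted block_follows (false :: wv)].
Proof.
have Hxv : lend x lv = x by rewrite -Hend.
have [wu [Eu Su]] := @closed_chain_blocks (size lu).+1 lu true (la' ++ lp)
  (ltnSn _) erefl sorted_u Hu Hxx.
have [wv [Ev Sv]] := @closed_chain_blocks (size lv).+1 lv false lv'
  (ltnSn _) erefl sorted_v Hv Hxv.
by exists wu, wv.
Qed.

(* If no block can follow itself, u and v are alternating words of the same
   length (otherwise one contains the other properly). *)
Lemma alternating_words wu wv :
  lu = expand (true :: wu) -> lv = expand (false :: wv) ->
  sorted block_follows (true :: wu) -> sorted block_follows (false :: wv) ->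
  ~~ block_follows true true -> ~~ block_follows false false ->
  exists L, lu = expand (alt true L) /\ lv = expand (alt false L).
Proof.
move=> Eu Ev Su Sv Haa Hbb.
have Hu' := word_alt Haa Hbb Su; have Hv' := word_alt Haa Hbb Sv.
case: (ltngtP (size wu) (size wv)) => Hs.
- have [r Hr] := @alt_prefix true (size wu).+1 (size wv) Hs.
  case: (@u_not_inside_v lb (expand r)) => //.
  rewrite Ev Hv' /= Hr -Hu' -cat_cons expand_cat.
  have -> : expand (false :: true :: wu) = lb ++ expand (true :: wu) by [].
  by rewrite -Eu -catA.
- have [r Hr] := @alt_prefix false (size wv).+1 (size wu) Hs.
  case: (@v_not_inside_u la (expand r)) => //.
  rewrite Eu Hu' /= Hr -Hv' -cat_cons expand_cat.
  have -> : expand (true :: false :: wv) = la ++ expand (false :: wv) by [].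
  by rewrite -Ev -catA.
- by exists (size wu).+1; rewrite Eu Ev Hu' Hv' Hs.
Qed.

(* If a may follow a, neither a -> b
   nor b -> a is allowed, so u = a^n, v = b^m (case 3); if b may follow b,
   likewise u = a and v = b^m; otherwise both words alternate and have the
   same length (cases 4 and 5, by parity). *)
Lemma closed_relation_shapes : exists n m : nat,
  ((x, lu) = ppow (x, la) n /\ (x, lv) = ppow (x, lb) m /\
     junction_in I (x, la) (x, lb) /\ junction_in I (x, lb) (x, la)) \/
  ((x, lu) = ppow (pcat (x, la) (x, lb)) m /\ (x, lv) = ppow (pcat (x, lb) (x, la)) m /\
     junction_in I (x, la) (x, la) /\ junction_in I (x, lb) (x, lb)) \/
  ((x, lu) = pcat (ppow (pcat (x, la) (x, lb)) m) (x, la) /\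
     (x, lv) = pcat (ppow (pcat (x, lb) (x, la)) m) (x, lb) /\
     junction_in I (x, la) (x, la) /\ junction_in I (x, lb) (x, lb)).
Proof.
have [wu [wv [Eu Ev Su Sv]]] := closed_words.
have excl b1 b2 b3 : b2 != b3 -> block_follows b1 b2 -> ~~ block_follows b1 b3.
  by move=> /eqP H12 H1; apply/negP => /(block_follows_functional H1).
have coexcl b1 b2 b3 : b2 != b3 -> block_follows b2 b1 -> ~~ block_follows b3 b1.
  by move=> /eqP H12 H1; apply/negP => /(block_follows_cofunctional H1).
case Haa: (block_follows true true).
  have Hab := excl true true false isT Haa; have Hba := coexcl true true false isT Haa.
  exists (size wu).+1, (size wv).+1; left.
  rewrite Eu Ev (word_const Su Hab) (word_const Sv Hba) !expand_nseq.
  by do 3?split; [exact: block_junction Hab | exact: block_junction Hba].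
case Hbb: (block_follows false false).
  have Hab := coexcl false false true isT Hbb; have Hba := excl false false true isT Hbb.
  exists 1, (size wv).+1; left.
  rewrite Eu Ev (word_single Su (negbT Haa) Hab) (word_const Sv Hba) !expand_nseq.
  by do 3?split; [exact: block_junction Hab | exact: block_junction Hba].
have [L [EuL EvL]] := alternating_words Eu Ev Su Sv (negbT Haa) (negbT Hbb).
have Jaa := block_junction (negbT Haa); have Jbb := block_junction (negbT Hbb).
exists 0, L./2; right; rewrite EuL EvL.
move: L./2 (odd_double_half L) => m; case: (odd L) => <-; [right | left].
- by rewrite add1n !expand_alt_odd; do 3?split.
- by rewrite add0n !expand_alt_even; do 3?split.
Qed.

End Blocks.

Lemma closed_case : exists b : qpath Q,
  simple_cycle b x /\ (forall al, al \in la -> al \notin b.2) /\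
  exists n m : nat,
    ((x, lu) = ppow (x, la) n /\ (x, lv) = ppow b m /\
       junction_in I (x, la) b /\ junction_in I b (x, la)) \/
    ((x, lu) = ppow (pcat (x, la) b) m /\ (x, lv) = ppow (pcat b (x, la)) m /\
       junction_in I (x, la) (x, la) /\ junction_in I b b) \/
    ((x, lu) = pcat (ppow (pcat (x, la) b) m) (x, la) /\
       (x, lv) = pcat (ppow (pcat b (x, la)) m) b /\
       junction_in I (x, la) (x, la) /\ junction_in I b b).
Proof.
have [lb' [l2 [Hlv Hb_end Hb_simp]]] := v_starts_with_cycle.
have Vb : valid_from x (be1 :: lb').
  by move: Hv; rewrite Hlv valid_from_cat => /andP[].
exists (x, be1 :: lb'); split; first by apply/and5P; split => //; apply/eqP.
split; first exact: cycles_disjoint Hlv Hb_simp.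
exact: closed_relation_shapes Hlv Hb_end Hb_simp.
Qed.

End ClosedRelation.

End Situation.

Lemma cycle_path_shape (Q : quiver) (a u v p : qpath Q) x :
  simple_cycle a x -> u = pcat a p -> v.1 = x -> v.2 != [::] ->
  exists al1 la' be1 lv', [/\ a = (x, al1 :: la'), u = (x, (al1 :: la') ++ p.2),
    v = (x, be1 :: lv'), lend x (al1 :: la') = x & all (fun d => src d != x) la'].
Proof.
case: a => ax la /and5P[_ /= /eqP -> /eqP Ea Hne Sa] ->.
case: la Hne Ea Sa => // al1 la' _ Ea Sa.
case: v => vx [|be1 lv'] //= -> _.
by exists al1, la', be1, lv'.
Qed.

Theorem lemma2p1 (k : closedFieldType) (Q : quiver) (I : kQ Q k -> Prop)
  (x y : vert Q) (u v a : qpath Q) (lam : k) :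
  admissible I -> special_biserial I ->
  valid u -> valid v -> u.1 = x -> v.1 = x -> pend u = y -> pend v = y ->
  u <> v -> ~ I (pind u) -> ~ I (pind v) -> lam != 0 ->
  I (fun p => pind u p - lam * pind v p) ->
  simple_cycle a x ->
  (exists p, valid p /\ p.1 = pend a /\ u = pcat a p) ->
  (x <> y ->
     ((exists al, al \in u.2 /\ al \in v.2) ->
        exists p b : qpath Q,
          valid p /\ p.1 = x /\ pend p = y /\
          valid b /\ b.1 = y /\ pend b = y /\ b.2 != [::] /\
          u = pcat a p /\ v = pcat p b) /\
     ((forall al, al \in u.2 -> al \notin v.2) ->
        exists (a1 a2 : qpath Q) (n : nat),
          valid a1 /\ a1.1 = x /\ valid a2 /\ a2.1 = pend a1 /\
          a1.2 != [::] /\ a2.2 != [::] /\ a = pcat a1 a2 /\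
          (1 <= n)%N /\ u = pcat (ppow a n) a1)) /\
  (x = y ->
     exists b : qpath Q,
       simple_cycle b x /\ (forall al, al \in a.2 -> al \notin b.2) /\
       exists n m : nat,
         (u = ppow a n /\ v = ppow b m /\
            junction_in I a b /\ junction_in I b a) \/
         (u = ppow (pcat a b) m /\ v = ppow (pcat b a) m /\
            junction_in I a a /\ junction_in I b b) \/
         (u = pcat (ppow (pcat a b) m) a /\ v = pcat (ppow (pcat b a) m) b /\
            junction_in I a a /\ junction_in I b b)).
Proof.
move=> HA HSB Vu Vv _ Hv1 Hpu Hpv Hne HnU HnV Hlam Hrel Hsc [p [_ [_ Hup]]].
have [al1 [la' [be1 [lv' [Ea Eu Ev Hla_end Hla_simp]]]]] :=
  cycle_path_shape Hsc Hup Hv1 (binomial_path_nontrivial HA Hne Hlam Hrel).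
clear Hup; subst a u v y.
have Hend : lend x ((al1 :: la') ++ p.2) = lend x (be1 :: lv') := esym Hpv.
have Hne' : (al1 :: la') ++ p.2 <> be1 :: lv' by move=> E; apply: Hne; congr (_, _).
split=> [Hxy | Hxx]; first split.
- exact (distinct_common HA HSB Vu Vv Hend Hne' HnU HnV Hlam Hrel Hla_end Hla_simp Hxy).
- exact (distinct_disjoint HA HSB Vu Vv Hend Hne' HnU HnV Hlam Hrel Hla_end Hla_simp Hxy).
- exact (closed_case HA HSB Vu Vv Hend Hne' HnU HnV Hlam Hrel Hla_end Hla_simp (esym Hxx)).
Qed.
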